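(* Let $W_2\in\{M_2,S_2\}$ and let $\phi:W_2\to W_2$ be a linear map such that $\sigma_{\mathcal{K}}(\phi(A))=\sigma_{\mathcal{K}}(A)$ for all $A\in W_2$. Then for all $A\in W_2$, $$\sigma_{\mathcal{K}}^{int}(A)=\sigma_{\mathcal{K}}^{int}(\phi(A))\quad\text{and}\quad \sigma_{\mathcal{K}}^{bd}(A)=\sigma_{\mathcal{K}}^{bd}(\phi(A)).$$
   Context: $M_2$ is the space of real $2\times2$ matrices, $S_2$ the subspace of symmetric ones. The Lorentz cone in $\mathbb{R}^2$ is $\mathcal{K}=\{(x_1,x_2)^T:\ |x_1|\le x_2\}$. For $A\in M_2$, a real $\lambda$ is an L-eigenvalue of $A$ if there is a nonzero $x\in\mathcal{K}$ with $(A-\lambda I)x\in\mathcal{K}$ and $x^T(A-\lambda I)x=0$ ($x$ is an associated L-eigenvector); $\sigma_{\mathcal{K}}(A)$ is the set of L-eigenvalues. $\lambda$ is an interior L-eigenvalue if it has an associated L-eigenvector in the interior of $\mathcal{K}$, and a boundary L-eigenvalue if it has an associated L-eigenvector on the boundary of $\mathcal{K}$; $\sigma_{\mathcal{K}}^{int}(A)$ and $\sigma_{\mathcal{K}}^{bd}(A)$ denote the sets of interior and boundary L-eigenvalues. *)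

From mathcomp Require Import all_boot all_order all_algebra.
From mathcomp Require Import reals.
Set Implicit Arguments. Unset Strict Implicit. Unset Printing Implicit Defensive.
Import Order.TTheory GRing.Theory Num.Theory.
Local Open Scope ring_scope.

(* Lorentz cone K = {(x1,x2) : |x1| <= x2} in R^2; coordinates x 0 0 = x1, x 1 0 = x2. *)
Definition i0 : 'I_2 := ord0.
Definition i1 : 'I_2 := ord_max.

Definition lorentz {R : realType} (x : 'cV[R]_2) : Prop := `|x i0 0| <= x i1 0.
Definition lorentz_int {R : realType} (x : 'cV[R]_2) : Prop := `|x i0 0| < x i1 0.
Definition lorentz_bd {R : realType} (x : 'cV[R]_2) : Prop := `|x i0 0| = x i1 0.

Definition L_eigvec {R : realType} (A : 'M[R]_2) (l : R) (x : 'cV[R]_2) : Prop :=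
  x != 0 /\ lorentz x /\ lorentz ((A - l%:M) *m x) /\ (x^T *m ((A - l%:M) *m x)) 0 0 = 0.

Definition L_spec {R : realType} (A : 'M[R]_2) : R -> Prop :=
  fun l => exists x, L_eigvec A l x.
Definition L_spec_int {R : realType} (A : 'M[R]_2) : R -> Prop :=
  fun l => exists x, L_eigvec A l x /\ lorentz_int x.
Definition L_spec_bd {R : realType} (A : 'M[R]_2) : R -> Prop :=
  fun l => exists x, L_eigvec A l x /\ lorentz_bd x.

(* membership in W_2: if sym then S_2 else M_2 *)
Definition inW2 {R : realType} (sym : bool) (A : 'M[R]_2) : Prop :=
  if sym then A^T = A else True.

From mathcomp Require Import all_boot all_order all_algebra.
From mathcomp Require Import reals ring lra.
Import Order.TTheory GRing.Theory Num.Theory.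
Local Open Scope ring_scope.

(* Write x = p (1, 1) + q (-1, 1). Then x lies in K iff p, q >= 0, it lies on the
   boundary iff moreover p q = 0, and x^T y = 2 (p p' + q q'). So the L-eigenvalues
   of A are the Pareto eigenvalues (complementarity eigenvalues for the nonnegative
   quadrant) of the matrix [[a, b], [c, d]] of A in this basis, which are explicit:
   the boundary ones are a (if c >= 0) and d (if b >= 0), the interior ones are the
   roots of (l - a) (l - d) = b c admitting a positive eigenvector.
   For symmetric A (b = c), the interior and boundary eigenvalues can be read off
   sigma_K(A) and sigma_K(-A) = sigma_K(phi(-A)) = sigma_K(-phi(A)).
   For M_2, testing phi on finitely many matrices with explicit spectra shows that,
   in these coordinates, phi is a scaling (b, c) |-> (k b, c / k) with k > 0, possibly
   composed with the swap (a, b, c, d) |-> (d, c, b, a) induced by the reflection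
   diag(-1, 1) of K; both maps preserve the two kinds of eigenvalues separately. *)

Set Implicit Arguments.
Unset Strict Implicit.
Unset Printing Implicit Defensive.

Section Pareto.
Variable R : realFieldType.
Implicit Types a b c d l p q x y : R.

Definition pareto_eigvec a b c d l p q :=
  (p != 0 \/ q != 0) /\ 0 <= p /\ 0 <= q /\
  0 <= (a - l) * p + b * q /\ 0 <= c * p + (d - l) * q /\
  p * ((a - l) * p + b * q) + q * (c * p + (d - l) * q) = 0.

Definition pareto_bd a b c d l := (l = a /\ 0 <= c) \/ (l = d /\ 0 <= b).

Definition pareto_int a b c d l :=
  (l - a) * (l - d) = b * c /\
  (0 < c * (l - d) \/ c = 0 /\ l = d) /\ (0 < b * (l - a) \/ b = 0 /\ l = a).

Definition pareto_spec a b c d l := pareto_bd a b c d l \/ pareto_int a b c d l.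

Lemma mulf_pos_eq0 x y : 0 < x -> x * y = 0 -> y = 0.
Proof. by move=> x_gt0 /eqP; rewrite mulf_eq0 (gt_eqF x_gt0) => /eqP. Qed.

Lemma pareto_eigvec_bd a b c d l p q :
  pareto_eigvec a b c d l p q -> p = 0 \/ q = 0 -> pareto_bd a b c d l.
Proof.
move=> [nz [p_ge0 [q_ge0 [y1_ge0 [y2_ge0 compl]]]]] [p0|q0]; subst.
- have q_gt0 : 0 < q by case: nz => [/eqP //|nz]; rewrite lt_def nz.
  rewrite !(mulr0, mul0r, add0r) in y1_ge0 compl.
  have := mulf_pos_eq0 q_gt0 compl; right; split; nra.
- have p_gt0 : 0 < p by case: nz => [nz|/eqP //]; rewrite lt_def nz.
  rewrite !(mulr0, mul0r, addr0) in y2_ge0 compl.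
  have := mulf_pos_eq0 p_gt0 compl; left; split; nra.
Qed.

Lemma pareto_bd_eigvec a b c d l : pareto_bd a b c d l ->
  exists p q, pareto_eigvec a b c d l p q /\ (p = 0 \/ q = 0).
Proof.
case=> [[-> c_ge0]|[-> b_ge0]]; [exists 1, 0|exists 0, 1];
  (split; last by [left|right]);
  (split; first by [left; rewrite oner_eq0|right; rewrite oner_eq0]); lra.
Qed.

Lemma mul_sign_of_eq c x p q :
  0 < p -> 0 < q -> x * q = c * p -> 0 < c * x \/ c = 0 /\ x = 0.
Proof.
move=> p_gt0 q_gt0 e; have [c0|c_neq0] := eqVneq c 0; [right|left].
  by split=> //; move: e; rewrite c0 mul0r; nra.
have c2p_gt0 : 0 < c ^+ 2 * p by rewrite mulr_gt0 ?exprn_even_gt0.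
by rewrite -(pmulr_lgt0 _ q_gt0) -mulrA e mulrA -expr2.
Qed.

Lemma pareto_eigvec_int a b c d l p q :
  pareto_eigvec a b c d l p q -> 0 < p -> 0 < q -> pareto_int a b c d l.
Proof.
move=> [_ [p_ge0 [q_ge0 [y1_ge0 [y2_ge0 compl]]]]] p_gt0 q_gt0.
have y1p_ge0 := mulr_ge0 p_ge0 y1_ge0; have y2q_ge0 := mulr_ge0 q_ge0 y2_ge0.
have /(mulf_pos_eq0 p_gt0) y1_0 : p * ((a - l) * p + b * q) = 0 by lra.
have /(mulf_pos_eq0 q_gt0) y2_0 : q * (c * p + (d - l) * q) = 0 by lra.
have ea : (l - a) * p = b * q by lra.
have ed : (l - d) * q = c * p by lra.
split; last split.
- apply: (@mulIf _ (p * q)); first by rewrite mulf_neq0 ?gt_eqF.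
  transitivity (((l - a) * p) * ((l - d) * q)); first by ring.
  by rewrite ea ed; ring.
- by case: (mul_sign_of_eq p_gt0 q_gt0 ed) => [|[-> /subr0_eq]]; [left|right].
- by case: (mul_sign_of_eq q_gt0 p_gt0 ea) => [|[-> /subr0_eq]]; [left|right].
Qed.

Lemma pareto_eigvec_of_kernel a b c d l p q : 0 < p -> 0 < q ->
  (a - l) * p + b * q = 0 -> c * p + (d - l) * q = 0 -> pareto_eigvec a b c d l p q.
Proof.
move=> p_gt0 q_gt0 y1_0 y2_0; rewrite /pareto_eigvec y1_0 y2_0.
by split; [left; rewrite gt_eqF | lra].
Qed.

Lemma pareto_int_eigvec a b c d l : pareto_int a b c d l ->
  exists p q, pareto_eigvec a b c d l p q /\ 0 < p /\ 0 < q.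
Proof.
move=> [det [[c_pos|[-> ->]] hb]].
  have c2_gt0 : 0 < c ^+ 2.
    by rewrite exprn_even_gt0 //; apply: contraTneq c_pos => ->; rewrite mul0r ltxx.
  exists (c * (l - d)), (c ^+ 2); split=> //; apply: pareto_eigvec_of_kernel => //.
    have -> : (a - l) * (c * (l - d)) + b * c ^+ 2 = c * (b * c - (l - a) * (l - d)) by ring.
    by rewrite det subrr mulr0.
  by ring.
case: hb => [b_pos|[-> ->]].
  have b2_gt0 : 0 < b ^+ 2.
    by rewrite exprn_even_gt0 //; apply: contraTneq b_pos => ->; rewrite mul0r ltxx.
  by exists (b ^+ 2), (b * (d - a)); split=> //; apply: pareto_eigvec_of_kernel => //; ring.
by exists 1, 1; split; [apply: pareto_eigvec_of_kernel; rewrite ?ltr01 //; ring | rewrite ltr01].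
Qed.

Lemma pareto_eigvec_spec a b c d l p q :
  pareto_eigvec a b c d l p q -> pareto_spec a b c d l.
Proof.
move=> v; have [_ [p_ge0 [q_ge0 _]]] := v.
have [p0|p_neq0] := eqVneq p 0; first by left; apply: pareto_eigvec_bd v _; left.
have [q0|q_neq0] := eqVneq q 0; first by left; apply: pareto_eigvec_bd v _; right.
by right; apply: pareto_eigvec_int v _ _; rewrite lt_def ?p_neq0 ?q_neq0.
Qed.

Definition pareto_spec_neg a b c d l := pareto_spec (- a) (- b) (- c) (- d) (- l).

Lemma pareto_int_oppW a b c d l :
  pareto_int a b c d l -> pareto_int (- a) (- b) (- c) (- d) (- l).
Proof.
move=> [det [hc hb]]; split; first lra.
split; [case: hc => [?|[? ?]] | case: hb => [?|[? ?]]]; by [left; lra | right; split; lra].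
Qed.

Lemma pareto_int_opp a b c d l :
  pareto_int (- a) (- b) (- c) (- d) (- l) <-> pareto_int a b c d l.
Proof.
by split=> [/pareto_int_oppW|/pareto_int_oppW //]; rewrite !opprK.
Qed.

Lemma pareto_spec_diag a d l : pareto_spec a 0 0 d l <-> l = a \/ l = d.
Proof.
split=> [[[[-> _]|[-> _]]|[_ [[?|[_ ->]] _]]]|[->|->]]; try lra.
- by left; left.
- by left; right.
Qed.

Lemma pareto_int_diag a d l : pareto_int a 0 0 d l <-> l = a /\ l = d.
Proof.
split=> [[_ [[?|[_ ->]] [?|[_ ->]]]]|[-> ->]]; try lra.
by split; [rewrite subrr mul0r | split; right].
Qed.

Lemma pareto_int_sym_gt a b d l : 0 < b -> pareto_int a b b d l -> a < l /\ d < l.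
Proof. by move=> b_gt0 [_ [[?|[? _]] [?|[? _]]]]; split; nra. Qed.

Lemma pareto_int_sym_lt a b d l : b < 0 -> pareto_int a b b d l -> l < a /\ l < d.
Proof. by move=> b_lt0 [_ [[?|[? _]] [?|[? _]]]]; split; nra. Qed.

Lemma pareto_int_sym_uniq a b d l l' : b != 0 ->
  pareto_int a b b d l -> pareto_int a b b d l' -> l' = l.
Proof.
move=> b_neq0 hl hl'.
have : (l - l') * (l + l' - a - d) = 0.
  transitivity ((l - a) * (l - d) - (l' - a) * (l' - d)); first by ring.
  by rewrite hl.1 hl'.1 subrr.
have : l + l' - a - d != 0.
  case: (ltrgtP 0 b) b_neq0 => // b_sgn _.
    by have := pareto_int_sym_gt b_sgn hl; have := pareto_int_sym_gt b_sgn hl'; lra.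
  by have := pareto_int_sym_lt b_sgn hl; have := pareto_int_sym_lt b_sgn hl'; lra.
by move=> /negPf s_neq0 /eqP; rewrite mulf_eq0 s_neq0 orbF subr_eq0 => /eqP ->.
Qed.

Lemma pareto_spec_sym_neg a b d l : b < 0 -> pareto_spec a b b d l -> pareto_int a b b d l.
Proof. by move=> b_lt0 [[[_ ?]|[_ ?]]|//]; lra. Qed.

Lemma pareto_spec_neg_sym_pos a b d l :
  0 < b -> pareto_spec_neg a b b d l -> pareto_int a b b d l.
Proof. by move=> b_gt0 [[[_ ?]|[_ ?]]|/pareto_int_opp //]; lra. Qed.

Lemma pareto_spec_neg_diag a d l : pareto_spec_neg a 0 0 d l <-> l = a \/ l = d.
Proof. by rewrite /pareto_spec_neg oppr0 pareto_spec_diag; split=> -[?|?]; lra. Qed.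

Lemma pareto_int_symE a b d l : pareto_int a b b d l <->
  [/\ pareto_spec a b b d l, pareto_spec_neg a b b d l &
      forall l', pareto_spec a b b d l' -> pareto_spec_neg a b b d l' -> l' = l].
Proof.
split=> [hl|[hs hn uniq]].
  split=> [|//|l' hs hn]; [by right | by right; apply/pareto_int_opp |].
  have [b_gt0|b_lt0|b0] := ltrgtP 0 b.
  - exact: pareto_int_sym_uniq (lt0r_neq0 b_gt0) hl (pareto_spec_neg_sym_pos b_gt0 hn).
  - exact: pareto_int_sym_uniq (ltr0_neq0 b_lt0) hl (pareto_spec_sym_neg b_lt0 hs).
  - by rewrite -b0 in hl hs; move: hl hs => /pareto_int_diag ? /pareto_spec_diag; lra.
have [b_gt0|b_lt0|b0] := ltrgtP 0 b.
- exact: pareto_spec_neg_sym_pos.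
- exact: pareto_spec_sym_neg.
- rewrite -b0 in uniq *; apply/pareto_int_diag.
  have ua := uniq a; have ud := uniq d.
  rewrite !pareto_spec_diag !pareto_spec_neg_diag in ua ud.
  by split; [symmetry; apply: ua; left | symmetry; apply: ud; right].
Qed.

Lemma pareto_bd_symE a b d l : pareto_bd a b b d l <->
  pareto_spec a b b d l /\
  (~ pareto_spec_neg a b b d l \/
   forall l', pareto_spec a b b d l' <-> pareto_spec_neg a b b d l').
Proof.
split=> [hl|[[//|hl] hn]].
  split; first by left.
  have [b_gt0|b_lt0|<-] := ltrgtP 0 b.
  - left=> /(pareto_spec_neg_sym_pos b_gt0) /(pareto_int_sym_gt b_gt0).
    by case: hl => -[-> _]; lra.
  - by case: hl => -[_ ?]; lra.
  - by right=> l'; rewrite pareto_spec_diag pareto_spec_neg_diag.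
have [b_gt0|b_lt0|b0] := ltrgtP 0 b.
- case: hn => [hn|sn]; first by case: hn; right; apply/pareto_int_opp.
  have /sn/(pareto_spec_neg_sym_pos b_gt0)/(pareto_int_sym_gt b_gt0) : pareto_spec a b b d a.
    by left; left; split=> //; apply: ltW.
  lra.
- case: hn => [hn|sn]; first by case: hn; right; apply/pareto_int_opp.
  have /sn/(pareto_spec_sym_neg b_lt0)/(pareto_int_sym_lt b_lt0) : pareto_spec_neg a b b d a.
    by left; left; split=> //; rewrite oppr_ge0 ltW.
  lra.
- by rewrite -b0 in hl *; move/pareto_int_diag: hl => [-> _]; left.
Qed.

Lemma pareto_sym_int_bd_eq a b d a' b' d' :
  (forall l, pareto_spec a' b' b' d' l <-> pareto_spec a b b d l) ->
  (forall l, pareto_spec_neg a' b' b' d' l <-> pareto_spec_neg a b b d l) ->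
  forall l, (pareto_int a b b d l <-> pareto_int a' b' b' d' l) /\
            (pareto_bd a b b d l <-> pareto_bd a' b' b' d' l).
Proof.
move=> hs hn l; rewrite !pareto_int_symE !pareto_bd_symE; split; split.
- case=> /(hs _).2 s /(hn _).2 n uniq; split=> // l' /(hs _).1 s' /(hn _).1 n'; exact: uniq.
- case=> /(hs _).1 s /(hn _).1 n uniq; split=> // l' /(hs _).2 s' /(hn _).2 n'; exact: uniq.
- move=> [/(hs l).2 s [n|sn]]; split=> //; first by left=> /(hn l).1.
  by right=> l'; rewrite hs hn.
- move=> [/(hs l).1 s [n|sn]]; split=> //; first by left=> /(hn l).2.
  by right=> l'; rewrite -hs -hn.
Qed.

Lemma pareto_spec_scalar mu b c l : b * c <= 0 -> pareto_spec mu b c mu l -> l = mu.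
Proof. by move=> bc_le0 [[[-> _]|[-> _]]|[det _]] //; nra. Qed.

Lemma pareto_spec_diag_mem (S : R -> Prop) a b c d :
  (forall l, pareto_spec a b c d l -> S l) ->
  (forall l, pareto_spec_neg a b c d l -> S l) -> S a /\ S d.
Proof.
move=> hs hn; split.
  have [c_ge0|c_lt0] := lerP 0 c; [apply: hs | apply: hn]; left; left; split=> //.
  by rewrite oppr_ge0 ltW.
have [b_ge0|b_lt0] := lerP 0 b; [apply: hs | apply: hn]; left; right; split=> //.
by rewrite oppr_ge0 ltW.
Qed.

Lemma pareto_spec_offdiagP a b c d l : l != a -> l != d ->
  pareto_spec a b c d l <-> [/\ (l - a) * (l - d) = b * c, 0 < c * (l - d) & 0 < b * (l - a)].
Proof.
move=> /eqP la /eqP ld; split.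
  by case=> [[[/la []]|[/ld []]]|[det [[c_pos|[_ /ld []]] [b_pos|[_ /la []]]]]].
by case=> det c_pos b_pos; right; split=> //; split; left.
Qed.

Lemma pareto_bd_swap a b c d l : pareto_bd d c b a l <-> pareto_bd a b c d l.
Proof. by split=> -[?|?]; [right|left|right|left]. Qed.

Lemma pareto_int_swap a b c d l : pareto_int d c b a l <-> pareto_int a b c d l.
Proof.
rewrite /pareto_int [(l - d) * _]mulrC [c * b]mulrC.
by split=> -[det [? ?]].
Qed.

Lemma pareto_spec_swap a b c d l : pareto_spec d c b a l <-> pareto_spec a b c d l.
Proof. by rewrite /pareto_spec pareto_bd_swap pareto_int_swap. Qed.

Lemma pareto_bd_scale k m a b c d l : 0 < k -> 0 < m ->
  pareto_bd a (b * k) (c * m) d l <-> pareto_bd a b c d l.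
Proof. by move=> k_gt0 m_gt0; rewrite /pareto_bd !pmulr_lge0. Qed.

Lemma pareto_int_scale k m a b c d l : 0 < k -> 0 < m -> k * m = 1 ->
  pareto_int a (b * k) (c * m) d l <-> pareto_int a b c d l.
Proof.
move=> k_gt0 m_gt0 km1.
rewrite /pareto_int mulrACA km1 mulr1 ![_ * _ * (l - _)]mulrAC.
rewrite (pmulr_lgt0 _ m_gt0) (pmulr_lgt0 _ k_gt0).
split=> -[det [hc hb]]; split=> //; split.
- case: hc => [|[cm0 ?]]; [by left | right; split=> //].
  by apply: (mulf_pos_eq0 m_gt0); rewrite mulrC.
- case: hb => [|[bk0 ?]]; [by left | right; split=> //].
  by apply: (mulf_pos_eq0 k_gt0); rewrite mulrC.
- by case: hc => [|[-> ?]]; [left|right; rewrite mul0r].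
- by case: hb => [|[-> ?]]; [left|right; rewrite mul0r].
Qed.

End Pareto.

Section LightCone.
Variable R : realType.
Implicit Types (A : 'M[R]_2) (a b c d l p q s t : R).

Lemma ord2P (i : 'I_2) : i = i0 \/ i = i1.
Proof. by case: i => [[|[|//]] ?]; [left|right]; apply: val_inj. Qed.

Lemma lift0_i1 : lift ord0 ord0 = i1.
Proof. exact: val_inj. Qed.

Lemma mulmx2E m (A : 'M[R]_(m, 2)) (x : 'cV[R]_2) i :
  (A *m x) i 0 = A i i0 * x i0 0 + A i i1 * x i1 0.
Proof. by rewrite !mxE !big_ord_recl big_ord0 addr0 lift0_i1. Qed.

Lemma dot2E (x y : 'cV[R]_2) : (x^T *m y) 0 0 = x i0 0 * y i0 0 + x i1 0 * y i1 0.
Proof. by rewrite mulmx2E !mxE. Qed.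

(* lcvec p q has coordinates [p, q] in the basis (1, 1), (-1, 1) of the two boundary
   rays of K, and [[lc_a A, lc_b A], [lc_c A, lc_d A]] is the matrix of A in this basis
   (lc_mx below is the inverse map). *)
Definition lcvec p q : 'cV[R]_2 := \col_i (if i == i0 then p - q else p + q).

Definition lc_a A := (A i0 i0 + A i0 i1 + A i1 i0 + A i1 i1) / 2.
Definition lc_b A := (A i0 i1 + A i1 i1 - A i0 i0 - A i1 i0) / 2.
Definition lc_c A := (A i1 i0 + A i1 i1 - A i0 i0 - A i0 i1) / 2.
Definition lc_d A := (A i0 i0 - A i0 i1 - A i1 i0 + A i1 i1) / 2.

Lemma lcvec0 p q : lcvec p q i0 0 = p - q. Proof. by rewrite mxE. Qed.
Lemma lcvec1 p q : lcvec p q i1 0 = p + q. Proof. by rewrite mxE. Qed.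

Lemma lcvecK (x : 'cV[R]_2) : x = lcvec ((x i1 0 + x i0 0) / 2) ((x i1 0 - x i0 0) / 2).
Proof.
apply/matrixP => i j; rewrite (ord1 j).
by case: (ord2P i) => ->; rewrite ?lcvec0 ?lcvec1; field.
Qed.

Lemma lcvec_neq0 p q : lcvec p q != 0 <-> p != 0 \/ q != 0.
Proof.
split=> [nz|pq_nz].
  have [p0|] := eqVneq p 0; last by left.
  have [q0|] := eqVneq q 0; last by right.
  exfalso; move/eqP: nz; apply; apply/matrixP => i j.
  by rewrite !mxE p0 q0 subr0 addr0; case: ifP.
apply/eqP => /matrixP lc0.
have := lc0 i0 0; have := lc0 i1 0; rewrite lcvec0 lcvec1 !mxE => ? ?.
by case: pq_nz => /eqP; apply; lra.
Qed.

Lemma lorentz_lcvec p q : lorentz (lcvec p q) <-> 0 <= p /\ 0 <= q.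
Proof.
rewrite /lorentz lcvec0 lcvec1 ler_norml.
by split=> [/andP[? ?]|[? ?]]; [split|apply/andP; split]; lra.
Qed.

Lemma lorentz_int_lcvec p q : lorentz_int (lcvec p q) <-> 0 < p /\ 0 < q.
Proof.
rewrite /lorentz_int lcvec0 lcvec1 ltr_norml.
by split=> [/andP[? ?]|[? ?]]; [split|apply/andP; split]; lra.
Qed.

Lemma lorentz_bd_lcvec p q : 0 <= p -> 0 <= q ->
  lorentz_bd (lcvec p q) <-> p = 0 \/ q = 0.
Proof.
move=> p_ge0 q_ge0; rewrite /lorentz_bd lcvec0 lcvec1.
split; last by case=> ->; rewrite ?sub0r ?subr0 ?add0r ?addr0 ?normrN ger0_norm.
have [pq_ge0|pq_lt0] := lerP 0 (p - q).
  by rewrite ger0_norm // => ?; right; lra.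
by rewrite ltr0_norm // => ?; left; lra.
Qed.

Lemma mulmx_lcvec A l p q : (A - l%:M) *m lcvec p q =
  lcvec ((lc_a A - l) * p + lc_b A * q) (lc_c A * p + (lc_d A - l) * q).
Proof.
apply/matrixP => i j; rewrite (ord1 j) mulmx2E !mxE /lc_a /lc_b /lc_c /lc_d /=.
by case: (ord2P i) => ->; rewrite /=; field.
Qed.

Lemma L_eigvec_lcvec A l p q :
  L_eigvec A l (lcvec p q) <-> pareto_eigvec (lc_a A) (lc_b A) (lc_c A) (lc_d A) l p q.
Proof.
rewrite /L_eigvec /pareto_eigvec mulmx_lcvec dot2E !lcvec0 !lcvec1.
rewrite lcvec_neq0 !lorentz_lcvec.
split=> [[nz [[? ?] [[? ?] compl]]]|[nz [? [? [? [? compl]]]]]]; do !split=> //; lra.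
Qed.

Lemma L_specE A l : L_spec A l <-> pareto_spec (lc_a A) (lc_b A) (lc_c A) (lc_d A) l.
Proof.
split=> [[x]|[/pareto_bd_eigvec|/pareto_int_eigvec] [p [q [v _]]]].
  by rewrite [x]lcvecK L_eigvec_lcvec => /pareto_eigvec_spec.
all: by exists (lcvec p q); apply/L_eigvec_lcvec.
Qed.

Lemma L_spec_intE A l :
  L_spec_int A l <-> pareto_int (lc_a A) (lc_b A) (lc_c A) (lc_d A) l.
Proof.
split=> [[x []]|/pareto_int_eigvec [p [q [v pq_gt0]]]].
  rewrite [x]lcvecK L_eigvec_lcvec lorentz_int_lcvec => v [p_gt0 q_gt0].
  exact: pareto_eigvec_int v p_gt0 q_gt0.
by exists (lcvec p q); rewrite L_eigvec_lcvec lorentz_int_lcvec.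
Qed.

Lemma L_spec_bdE A l :
  L_spec_bd A l <-> pareto_bd (lc_a A) (lc_b A) (lc_c A) (lc_d A) l.
Proof.
split=> [[x []]|/pareto_bd_eigvec [p [q [v pq0]]]].
  rewrite [x]lcvecK L_eigvec_lcvec => v; have [_ [p_ge0 [q_ge0 _]]] := v.
  by rewrite lorentz_bd_lcvec //; apply: pareto_eigvec_bd v.
have [_ [p_ge0 [q_ge0 _]]] := v.
by exists (lcvec p q); rewrite L_eigvec_lcvec lorentz_bd_lcvec.
Qed.

Lemma lc_sym A : A^T = A -> lc_c A = lc_b A.
Proof.
move=> /matrixP/(_ i1 i0); rewrite mxE => e.
by rewrite /lc_b /lc_c e; field.
Qed.

Lemma lc_opp A : [/\ lc_a (- A) = - lc_a A, lc_b (- A) = - lc_b A,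
  lc_c (- A) = - lc_c A & lc_d (- A) = - lc_d A].
Proof. by rewrite /lc_a /lc_b /lc_c /lc_d !mxE; split; field. Qed.

Lemma lc_lincomb (U V E F : 'M[R]_2) s t b c :
  let M := s *: U + t *: V + b *: E + c *: F in
  [/\ lc_a M = s * lc_a U + t * lc_a V + b * lc_a E + c * lc_a F,
      lc_b M = s * lc_b U + t * lc_b V + b * lc_b E + c * lc_b F,
      lc_c M = s * lc_c U + t * lc_c V + b * lc_c E + c * lc_c F &
      lc_d M = s * lc_d U + t * lc_d V + b * lc_d E + c * lc_d F].
Proof. by rewrite /lc_a /lc_b /lc_c /lc_d !mxE; split; field. Qed.

Definition lc_mx a b c d : 'M[R]_2 := \matrix_(i, j)
  if i == i0 then (if j == i0 then (a - b - c + d) / 2 else (a + b - c - d) / 2)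
  else (if j == i0 then (a - b + c - d) / 2 else (a + b + c + d) / 2).

Lemma lc_mxK a b c d : [/\ lc_a (lc_mx a b c d) = a, lc_b (lc_mx a b c d) = b,
  lc_c (lc_mx a b c d) = c & lc_d (lc_mx a b c d) = d].
Proof. by rewrite /lc_a /lc_b /lc_c /lc_d !mxE /=; split; field. Qed.

Lemma lc_mxE A : A = lc_mx (lc_a A) (lc_b A) (lc_c A) (lc_d A).
Proof.
apply/matrixP => i j; rewrite mxE /lc_a /lc_b /lc_c /lc_d.
by case: (ord2P i) => ->; case: (ord2P j) => ->; rewrite /=; field.
Qed.

Lemma lc_mx_decomp s t b c : lc_mx (s + t) b c (s - t) =
  s *: lc_mx 1 0 0 1 + t *: lc_mx 1 0 0 (-1) + b *: lc_mx 0 1 0 0 + c *: lc_mx 0 0 1 0.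
Proof.
apply/matrixP => i j; rewrite !mxE.
by case: (ord2P i) => ->; case: (ord2P j) => ->; rewrite /=; field.
Qed.

(* Conjugation by the reflection diag(-1, 1), which maps K onto itself and swaps
   its two boundary rays. *)
Definition reflect_mx A : 'M[R]_2 := \matrix_(i, j) (if i == j then A i j else - A i j).

Lemma reflect_mxD A B : reflect_mx (A + B) = reflect_mx A + reflect_mx B.
Proof. by apply/matrixP => i j; rewrite !mxE; case: ifP; rewrite ?opprD. Qed.

Lemma reflect_mxZ s A : reflect_mx (s *: A) = s *: reflect_mx A.
Proof. by apply/matrixP => i j; rewrite !mxE; case: ifP; rewrite ?mulrN. Qed.

Lemma lc_reflect A : [/\ lc_a (reflect_mx A) = lc_d A, lc_b (reflect_mx A) = lc_c A,
  lc_c (reflect_mx A) = lc_b A & lc_d (reflect_mx A) = lc_a A].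
Proof. by rewrite /lc_a /lc_b /lc_c /lc_d !mxE /=; split; field. Qed.

Lemma L_spec_reflect A l : L_spec (reflect_mx A) l <-> L_spec A l.
Proof.
by rewrite !L_specE; case: (lc_reflect A) => -> -> -> ->; apply: pareto_spec_swap.
Qed.

Lemma L_spec_int_reflect A l : L_spec_int (reflect_mx A) l <-> L_spec_int A l.
Proof.
by rewrite !L_spec_intE; case: (lc_reflect A) => -> -> -> ->; apply: pareto_int_swap.
Qed.

Lemma L_spec_bd_reflect A l : L_spec_bd (reflect_mx A) l <-> L_spec_bd A l.
Proof.
by rewrite !L_spec_bdE; case: (lc_reflect A) => -> -> -> ->; apply: pareto_bd_swap.
Qed.

Lemma L_spec_sym_int_bd A B : A^T = A -> B^T = B ->
  (forall l, L_spec B l <-> L_spec A l) -> (forall l, L_spec (- B) l <-> L_spec (- A) l) ->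
  forall l, (L_spec_int A l <-> L_spec_int B l) /\ (L_spec_bd A l <-> L_spec_bd B l).
Proof.
move=> /lc_sym eA /lc_sym eB hs hn l; rewrite !L_spec_intE !L_spec_bdE eA eB.
apply: pareto_sym_int_bd_eq => l'; first by have := hs l'; rewrite !L_specE eA eB.
have := hn (- l'); rewrite !L_specE /pareto_spec_neg.
by case: (lc_opp A) (lc_opp B) => -> -> -> -> [-> -> -> ->]; rewrite eA eB.
Qed.

End LightCone.

Section GeneralPreserver.
Variable R : realType.
Variables U V E F : 'M[R]_2.
Implicit Types b c l s t : R.

(* U, V, E, F are the images of the matrices with light-cone coordinates
   [[1, 0], [0, 1]], [[1, 0], [0, -1]], [[0, 1], [0, 0]] and [[0, 0], [1, 0]]. *)
Hypothesis hspec : forall s t b c l,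
  L_spec (s *: U + t *: V + b *: E + c *: F) l <-> L_spec (lc_mx (s + t) b c (s - t)) l.

Local Notation img_a s t b c := (s * lc_a U + t * lc_a V + b * lc_a E + c * lc_a F).
Local Notation img_b s t b c := (s * lc_b U + t * lc_b V + b * lc_b E + c * lc_b F).
Local Notation img_c s t b c := (s * lc_c U + t * lc_c V + b * lc_c E + c * lc_c F).
Local Notation img_d s t b c := (s * lc_d U + t * lc_d V + b * lc_d E + c * lc_d F).

Lemma img_spec s t b c l :
  pareto_spec (img_a s t b c) (img_b s t b c) (img_c s t b c) (img_d s t b c) l <->
  pareto_spec (s + t) b c (s - t) l.
Proof.
have := hspec s t b c l; rewrite !L_specE.
case: (lc_lincomb U V E F s t b c) (lc_mxK (s + t) b c (s - t)).
by move=> -> -> -> -> [-> -> -> ->].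
Qed.

Lemma img_spec_neg s t b c l :
  pareto_spec_neg (img_a s t b c) (img_b s t b c) (img_c s t b c) (img_d s t b c) l <->
  pareto_spec_neg (s + t) b c (s - t) l.
Proof. by have := img_spec (- s) (- t) (- b) (- c) (- l); rewrite !mulNr -!opprD. Qed.

Lemma img_scalar_diag s b c : b * c <= 0 -> img_a s 0 b c = s /\ img_d s 0 b c = s.
Proof.
move=> bc_le0; apply: (@pareto_spec_diag_mem _ (eq^~ s)) => l.
  by move/img_spec; rewrite addr0 subr0; apply: pareto_spec_scalar.
move/img_spec_neg; rewrite /pareto_spec_neg addr0 subr0.
by move/pareto_spec_scalar; rewrite mulrNN => /(_ bc_le0) /oppr_inj.
Qed.

Lemma U_diag : lc_a U = 1 /\ lc_d U = 1.
Proof. by have := @img_scalar_diag 1 0 0; rewrite mulr0 => /(_ (lexx 0)); lra. Qed.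

Lemma E_diag : lc_a E = 0 /\ lc_d E = 0.
Proof. by have := @img_scalar_diag 0 1 0; rewrite mulr0 => /(_ (lexx 0)); lra. Qed.

Lemma F_diag : lc_a F = 0 /\ lc_d F = 0.
Proof. by have := @img_scalar_diag 0 0 1; rewrite mul0r => /(_ (lexx 0)); lra. Qed.

Lemma V_diag : (lc_a V = 1 \/ lc_a V = -1) /\ (lc_d V = 1 \/ lc_d V = -1).
Proof.
pose S l := l = 1 \/ l = -1.
have : S (img_a 0 1 0 0) /\ S (img_d 0 1 0 0).
  apply: pareto_spec_diag_mem => l; rewrite /S.
    by move/img_spec/pareto_spec_diag; lra.
  by move/img_spec_neg/pareto_spec_neg_diag; lra.
by rewrite /S !mul0r !mul1r !add0r !addr0.
Qed.

Lemma img_int_transfer s t b c l :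
  [/\ (l - (s + t)) * (l - (s - t)) = b * c, 0 < c * (l - (s - t)),
      0 < b * (l - (s + t)), l != img_a s t b c & l != img_d s t b c] ->
  [/\ (l - img_a s t b c) * (l - img_d s t b c) = img_b s t b c * img_c s t b c,
      0 < img_c s t b c * (l - img_d s t b c) & 0 < img_b s t b c * (l - img_a s t b c)].
Proof.
case=> det c_pos b_pos la ld; apply/pareto_spec_offdiagP => //; apply/img_spec.
by apply/pareto_spec_offdiagP; rewrite ?det //; apply/eqP; nra.
Qed.

Lemma EF_sum :
  (lc_b E + lc_b F) * (lc_c E + lc_c F) = 1 /\ 0 < lc_b E + lc_b F /\ 0 < lc_c E + lc_c F.
Proof.
have [Ea Ed] := E_diag; have [Fa Fd] := F_diag.
have [] := @img_int_transfer 0 0 1 1 1 ltac:(split; lra).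
by rewrite Ea Ed Fa Fd; lra.
Qed.

Lemma EF_offdiag :
  (0 < lc_b E /\ lc_c E = 0 /\ lc_b F = 0 /\ 0 < lc_c F /\ lc_b E * lc_c F = 1) \/
  (lc_b E = 0 /\ 0 < lc_c E /\ 0 < lc_b F /\ lc_c F = 0 /\ lc_b F * lc_c E = 1).
Proof.
have [Ea Ed] := E_diag; have [Fa Fd] := F_diag; have [e11 [sb_gt0 _]] := EF_sum.
have [] := @img_int_transfer 0 0 1 4 2 ltac:(split; lra); rewrite Ea Ed Fa Fd => e14 _ _.
have [] := @img_int_transfer 0 0 4 1 2 ltac:(split; lra); rewrite Ea Ed Fa Fd => e41 _ _.
set b1 := lc_b E in e11 sb_gt0 e14 e41 *; set c1 := lc_c E in e11 e14 e41 *.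
set b2 := lc_b F in e11 sb_gt0 e14 e41 *; set c2 := lc_c F in e11 e14 e41 *.
have b1c1 : b1 * c1 = 0 by lra.
have b2c2 : b2 * c2 = 0 by lra.
have cross : b1 * c2 + b2 * c1 = 1 by lra.
move/eqP: b1c1; rewrite mulf_eq0 => /orP[/eqP b1_0|/eqP c1_0].
  rewrite b1_0 mul0r add0r in cross; rewrite b1_0 add0r in sb_gt0.
  have c2_0 := mulf_pos_eq0 sb_gt0 b2c2.
  by right; do !split=> //; nra.
rewrite c1_0 mulr0 addr0 in cross.
have b2_0 : b2 = 0 by rewrite -[b2]mulr1 -cross mulrCA b2c2 mulr0.
by left; do !split=> //; nra.
Qed.

Lemma U_offdiag : lc_b U = 0 /\ lc_c U = 0.
Proof.
have [Ua Ud] := U_diag; have [Ea Ed] := E_diag; have [Fa Fd] := F_diag.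
have [e11 [sb_gt0 sc_gt0]] := EF_sum.
have [] := @img_int_transfer 1 0 1 1 2 ltac:(split; lra); rewrite Ua Ud Ea Ed Fa Fd => e1 _ _.
have [] := @img_int_transfer 1 0 2 2 3 ltac:(split; lra); rewrite Ua Ud Ea Ed Fa Fd => e2 _ _.
have xy0 : lc_b U * lc_c U = 0 by lra.
have lin0 : lc_b U * (lc_c E + lc_c F) + (lc_b E + lc_b F) * lc_c U = 0 by lra.
move/eqP: xy0; rewrite mulf_eq0 => /orP[/eqP x0|/eqP y0].
  by rewrite x0 mul0r add0r in lin0; split=> //; apply: mulf_pos_eq0 sb_gt0 lin0.
by rewrite y0 mulr0 addr0 mulrC in lin0; split=> //; apply: mulf_pos_eq0 sc_gt0 lin0.
Qed.

Lemma V_coords_scaling : lc_c E = 0 -> lc_b F = 0 ->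
  [/\ lc_a V = 1, lc_d V = -1, lc_b V = 0 & lc_c V = 0].
Proof.
move=> Ec Fb.
have [Ua Ud] := U_diag; have [Ub Uc] := U_offdiag.
have [Ea Ed] := E_diag; have [Fa Fd] := F_diag; have [Va Vd] := V_diag.
have [km [k_gt0 m_gt0]] := EF_sum; rewrite Ec Fb addr0 add0r in km k_gt0 m_gt0.
have test b c l :
    [/\ (l - 1) * (l + 1) = b * c, 0 < c * (l + 1), 0 < b * (l - 1) & 1 < l] ->
    (l - lc_a V) * (l - lc_d V) = (lc_b V + b * lc_b E) * (lc_c V + c * lc_c F).
  case=> det c_pos b_pos l_gt1; have [] := @img_int_transfer 0 1 b c l.
    by split; rewrite ?Ea ?Ed ?Fa ?Fd; lra.
  by rewrite Ua Ud Ub Uc Ea Ed Fa Fd Ec Fb => e _ _; lra.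
have e1 := test 1 3 2 ltac:(split; lra); have e2 := test 3 1 2 ltac:(split; lra).
have e3 := test 2 4 3 ltac:(split; lra); have e4 := test 1 8 3 ltac:(split; lra).
have /(mulf_pos_eq0 m_gt0) Vb : lc_c F * lc_b V = 0 by lra.
have /(mulf_pos_eq0 k_gt0) Vc : lc_b E * lc_c V = 0 by lra.
rewrite Vb Vc !add0r in e1 e2 e3 e4.
have Va1 : lc_a V = 1.
  (* Otherwise 1 would be an L-eigenvalue of the image of [[1, 0], [-1, -1]], but not
     of that matrix itself. *)
  case: Va => // Vam1; exfalso.
  have /(img_spec 0 1 0 (-1) 1).1 : pareto_spec (img_a 0 1 0 (-1)) (img_b 0 1 0 (-1))
                                         (img_c 0 1 0 (-1)) (img_d 0 1 0 (-1)) 1.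
    by left; right; split; lra.
  by case=> [[[_ ?]|[? _]]|[_ [[?|[? _]] _]]]; lra.
split=> //; lra.
Qed.

Lemma L_spec_int_bd_scaling : lc_c E = 0 -> lc_b F = 0 -> forall s t b c l,
  (L_spec_int (lc_mx (s + t) b c (s - t)) l <->
   L_spec_int (s *: U + t *: V + b *: E + c *: F) l) /\
  (L_spec_bd (lc_mx (s + t) b c (s - t)) l <->
   L_spec_bd (s *: U + t *: V + b *: E + c *: F) l).
Proof.
move=> Ec Fb s t b c l.
have [Ua Ud] := U_diag; have [Ub Uc] := U_offdiag.
have [Ea Ed] := E_diag; have [Fa Fd] := F_diag.
have [Va Vd Vb Vc] := V_coords_scaling Ec Fb.
have [km [k_gt0 m_gt0]] := EF_sum; rewrite Ec Fb addr0 add0r in km k_gt0 m_gt0.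
rewrite !L_spec_intE !L_spec_bdE.
case: (lc_mxK (s + t) b c (s - t)) (lc_lincomb U V E F s t b c) => -> -> -> -> [-> -> -> ->].
rewrite Ua Ud Ub Uc Va Vd Vb Vc Ea Ed Ec Fa Fd Fb !mulr0 !mulr1 !addr0 !add0r mulrN1.
by rewrite pareto_int_scale // pareto_bd_scale.
Qed.

End GeneralPreserver.

Lemma L_spec_preserver (R : realType) (phi : {linear 'M[R]_2 -> 'M[R]_2}) :
  (forall A l, L_spec (phi A) l <-> L_spec A l) ->
  forall A l, (L_spec_int A l <-> L_spec_int (phi A) l) /\
              (L_spec_bd A l <-> L_spec_bd (phi A) l).
Proof.
move=> hphi A l.
pose U := phi (lc_mx 1 0 0 1); pose V := phi (lc_mx 1 0 0 (-1)).
pose E := phi (lc_mx 0 1 0 0); pose F := phi (lc_mx 0 0 1 0).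
have phi_lc s t b c : phi (lc_mx (s + t) b c (s - t)) = s *: U + t *: V + b *: E + c *: F.
  by rewrite lc_mx_decomp !linearD !linearZ.
have hspec s t b c l' :
    L_spec (s *: U + t *: V + b *: E + c *: F) l' <-> L_spec (lc_mx (s + t) b c (s - t)) l'.
  by rewrite -phi_lc hphi.
pose s := (lc_a A + lc_d A) / 2; pose t := (lc_a A - lc_d A) / 2.
have eA : A = lc_mx (s + t) (lc_b A) (lc_c A) (s - t).
  by rewrite [LHS]lc_mxE /s /t; congr lc_mx; field.
have phiA : phi A = s *: U + t *: V + lc_b A *: E + lc_c A *: F by rewrite {1}eA phi_lc.
case: (EF_offdiag hspec) => [[_ [Ec0 [Fb0 _]]]|[Eb0 [_ [_ [Fc0 _]]]]].
  by have := L_spec_int_bd_scaling hspec Ec0 Fb0 s t (lc_b A) (lc_c A) l; rewrite -eA -phiA.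
(* Conjugating by the reflection turns the second alternative into the first. *)
have hspec' s' t' b c l' :
    L_spec (s' *: reflect_mx U + t' *: reflect_mx V + b *: reflect_mx E + c *: reflect_mx F) l'
    <-> L_spec (lc_mx (s' + t') b c (s' - t')) l'.
  by rewrite -!reflect_mxZ -!reflect_mxD L_spec_reflect.
have := L_spec_int_bd_scaling hspec' _ _ s t (lc_b A) (lc_c A) l.
rewrite -!reflect_mxZ -!reflect_mxD L_spec_int_reflect L_spec_bd_reflect -eA -phiA; apply.
  by case: (lc_reflect E) => _ _ ->.
by case: (lc_reflect F) => _ ->.
Qed.

Theorem corollary1p2 (R : realType) (sym : bool)
  (phi : {linear 'M[R]_2 -> 'M[R]_2})
  (hW : forall A, inW2 sym A -> inW2 sym (phi A))
  (hspec : forall A, inW2 sym A -> forall l, L_spec (phi A) l <-> L_spec A l) :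
  forall A, inW2 sym A ->
    (forall l, L_spec_int A l <-> L_spec_int (phi A) l) /\
    (forall l, L_spec_bd A l <-> L_spec_bd (phi A) l).
Proof.
move=> A; case: sym hW hspec => hW hspec hA; last first.
  by split=> l; have [] := L_spec_preserver (fun B => hspec B I) A l.
have hNA : (- A)^T = - A by rewrite linearN /= hA.
have hsp := L_spec_sym_int_bd hA (hW A hA) (hspec A hA).
have /hsp {}hsp : forall l, L_spec (- phi A) l <-> L_spec (- A) l.
  by move=> l; rewrite -linearN; apply: hspec.
by split=> l; case: (hsp l).
Qed.
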